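(* Consider the following TDCD process. Let $N\ge 1$ silos each contain $K\ge 1$ clients, let $D=D_1+\dots+D_N$, and write every $\theta\in\mathbb{R}^D$ in blocks $\theta=[\theta_{(1)}^T,\dots,\theta_{(N)}^T]^T$ with $\theta_{(j)}\in\mathbb{R}^{D_j}$. Fix an integer $Q\ge1$ and $\eta>0$. Client $k$ of silo $j$ holds $\theta^t_{k,j}\in\mathbb{R}^{D_j}$. Define $\tilde\theta^t\in\mathbb{R}^D$ by $\tilde\theta^t_{(j)}=\frac1K\sum_k\theta^t_{k,j}$. At every multiple $t$ of $Q$, each $\theta^t_{k,j}$ is reset to $\tilde\theta^t_{(j)}$. For the current iteration $t$, let $t_0$ be the most recent such synchronization iteration before $t$ (with $t-t_0\le Q$). Define $y^t_{k,j}\in\mathbb{R}^D$ by $(y^t_{k,j})_{(j)}=\theta^t_{k,j}$ and $(y^t_{k,j})_{(l)}=\tilde\theta^{t_0}_{(l)}$ for $l\ne j$. The update is $\theta^{t+1}_{k,j}=\theta^t_{k,j}-\eta\, g_{k,j}(y^t_{k,j})$, where $g_{k,j}(\cdot)\in\mathbb{R}^{D_j}$ is the stochastic partial gradient computed by client $k$ of silo $j$ on the current minibatch. Then for any constant $L_{\max}>0$, $$\frac{L_{\max}^2}{K}\sum_{j=1}^N\sum_{k=1}^K\|\tilde\theta^t-y^t_{k,j}\|^2\le\frac{\eta^2L_{\max}^2QN}{K}\sum_{j=1}^N\sum_{\tau=t_0}^{t-1}\sum_{p=1}^K\|g_{p,j}(y^\tau_{p,j})\|^2.$$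
   Context: In the paper, $L_{\max}=\max_j L_j$, where $L_j$ is the Lipschitz constant of the block partial gradient $\nabla_{(j)}\mathcal{L}$ of the loss. The inequality does not depend on that interpretation, since both sides carry the factor $L_{\max}^2$. *)

From mathcomp Require Import all_boot all_order all_algebra.
Set Implicit Arguments. Unset Strict Implicit. Unset Printing Implicit Defensive.
Import Order.TTheory GRing.Theory Num.Theory.
Local Open Scope ring_scope.

Section TDCD.
Variables (R : realFieldType) (N K Q : nat) (D : 'I_N -> nat).

Definition sqn n (v : 'rV[R]_n) : R := \sum_(i < n) (v 0 i) ^+ 2.

(* A vector of R^D, D = D_1 + ... + D_N, given by its blocks theta_(j) in R^{D_j}. *)
Definition bvec := forall j : 'I_N, 'rV[R]_(D j).

Definition bsqdist (x y : bvec) : R := \sum_(l < N) sqn (x l - y l).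

(* theta t k j : local parameter of client k of silo j at iteration t
   (value produced by the update, before the possible synchronization reset). *)
Variable theta : nat -> 'I_K -> forall j : 'I_N, 'rV[R]_(D j).

Definition theta_avg (t : nat) : bvec :=
  fun j => (K%:R)^-1 *: \sum_(k < K) theta t k j.

Definition last_sync (t : nat) : nat := (Q * (t %/ Q))%N.

(* Value actually held after the reset at multiples of Q. *)
Definition theta_cur (t : nat) (k : 'I_K) (j : 'I_N) : 'rV[R]_(D j) :=
  if (Q %| t)%N then theta_avg t j else theta t k j.

Definition yvec (t : nat) (k : 'I_K) (j : 'I_N) : bvec :=
  @dfwith _ (fun l => 'rV[R]_(D l)) (theta_avg (last_sync t)) j (theta_cur t k j).

End TDCD.

From mathcomp Require Import all_boot all_order all_algebra.
From mathcomp Require Import ring.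
Set Implicit Arguments. Unset Strict Implicit. Unset Printing Implicit Defensive.
Import Order.TTheory GRing.Theory Num.Theory.
Local Open Scope ring_scope.

(* Between two synchronizations a local iterate is the last average minus
   eta times the sum of its own stochastic gradients, so by Cauchy-Schwarz its
   squared distance to that average is at most eta^2 Q times the sum of the
   squared gradients.  For a fixed silo j, the squared distances from the
   current average to the y_{k,j}, summed over the clients k, split blockwise:
   on a block l <> j we get K times the squared distance between the current
   and the last average, which Jensen bounds by the spread
   sum_k |theta_{k,l} - last average_(l)|^2; on block j we get the spread of
   the clients around their own mean, which the parallel-axis identity bounds
   by the same quantity for l = j.  Summing over j costs the factor N. *)

Lemma size_index_enum (T : finType) : size (index_enum T) = #|T|.
Proof. by rewrite cardE enumT. Qed.

Section SquaredNorm.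
Variable R : realFieldType.

Lemma sqn_ge0 n (v : 'rV[R]_n) : 0 <= sqn v.
Proof. by apply: sumr_ge0 => i _; rewrite sqr_ge0. Qed.

Lemma sqnN n (v : 'rV[R]_n) : sqn (- v) = sqn v.
Proof. by apply: eq_bigr => i _; rewrite mxE sqrrN. Qed.

Lemma sqnZ n (a : R) (v : 'rV[R]_n) : sqn (a *: v) = a ^+ 2 * sqn v.
Proof. by rewrite /sqn mulr_sumr; apply: eq_bigr => i _; rewrite mxE exprMn. Qed.

Lemma sqn0 n : sqn (0 : 'rV[R]_n) = 0.
Proof. by rewrite -(scale0r 0) sqnZ expr0n mul0r. Qed.

Variables (I : Type) (r : seq I).
Local Notation n := (size r)%:R.

Lemma sum_sqr_sub_mean (x : I -> R) (a : R) :
  let m := n^-1 * \sum_(i <- r) x i in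
  \sum_(i <- r) (x i - a) ^+ 2 = \sum_(i <- r) (m - x i) ^+ 2 + n * (m - a) ^+ 2.
Proof.
move=> m; have sum_dev : \sum_(i <- r) (m - x i) = 0.
  rewrite sumrB big_const_seq count_predT iter_addr_0 -mulr_natl mulrA.
  have [/size0nil -> | r_gt0] := posnP (size r); first by rewrite big_nil mulr0 subrr.
  by rewrite mulfV ?mul1r ?subrr // pnatr_eq0 -lt0n.
transitivity (\sum_(i <- r) ((m - x i) ^+ 2 + ((m - a) ^+ 2 - 2 * (m - a) * (m - x i)))).
  by apply: eq_bigr => i _; ring.
rewrite big_split /= sumrB -(mulr_sumr _ _ _ (2 * (m - a))) sum_dev mulr0 subr0.
by rewrite big_const_seq count_predT iter_addr_0 mulr_natl.
Qed.

Definition row_mean k (v : I -> 'rV[R]_k) : 'rV[R]_k := n^-1 *: \sum_(i <- r) v i.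

Lemma sum_sqn_sub_mean k (v : I -> 'rV[R]_k) a :
  \sum_(i <- r) sqn (v i - a) =
  \sum_(i <- r) sqn (row_mean v - v i) + n * sqn (row_mean v - a).
Proof.
rewrite /sqn mulr_sumr exchange_big [X in _ = X + _]exchange_big -big_split /=.
apply: eq_bigr => c _; rewrite !mxE summxE.
under eq_bigr do rewrite !mxE.
under [X in _ = X + _]eq_bigr do rewrite !mxE summxE.
exact: sum_sqr_sub_mean.
Qed.

Lemma sqn_mean_le k (v : I -> 'rV[R]_k) a :
  n * sqn (row_mean v - a) <= \sum_(i <- r) sqn (v i - a).
Proof.
by rewrite sum_sqn_sub_mean lerDr; apply: sumr_ge0 => i _; apply: sqn_ge0.
Qed.

Lemma sum_sqn_mean_le k (v : I -> 'rV[R]_k) a :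
  \sum_(i <- r) sqn (row_mean v - v i) <= \sum_(i <- r) sqn (v i - a).
Proof.
by rewrite sum_sqn_sub_mean lerDl mulr_ge0 ?ler0n ?sqn_ge0.
Qed.

Lemma sqn_sum_le k (v : I -> 'rV[R]_k) :
  sqn (\sum_(i <- r) v i) <= n * \sum_(i <- r) sqn (v i).
Proof.
have [/size0nil -> | r_gt0] := posnP (size r); first by rewrite !big_nil sqn0 mulr0.
have n_gt0 : 0 < n :> R by rewrite ltr0n.
have := sqn_mean_le v 0; under eq_bigr do rewrite subr0.
by rewrite subr0 sqnZ expr2 !mulrA mulfV ?gt_eqF // mul1r ler_pdivrMl.
Qed.

End SquaredNorm.

Section BlockMean.
Variables (R : realFieldType) (N K : nat) (D : 'I_N -> nat).

Lemma row_mean_ord n (v : 'I_K -> 'rV[R]_n) :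
  row_mean (index_enum 'I_K) v = (K%:R)^-1 *: \sum_(k < K) v k.
Proof. by rewrite /row_mean size_index_enum card_ord. Qed.

Lemma sum_bsqdist_mean_dfwith (w : 'I_K -> bvec R D) (m z : bvec R D) j :
  (forall l, m l = (K%:R)^-1 *: \sum_(k < K) w k l) ->
  \sum_(k < K) bsqdist m (@dfwith _ (fun l => 'rV[R]_(D l)) z j (w k j)) <=
  \sum_(l < N) \sum_(k < K) sqn (w k l - z l).
Proof.
move=> m_mean; rewrite /bsqdist exchange_big /=; apply: ler_sum => l _.
rewrite m_mean -row_mean_ord.
have [<- | ne_jl] := eqVneq j l.
  under eq_bigr do rewrite dfwith_in.
  exact: sum_sqn_mean_le.
under eq_bigr do rewrite dfwith_out //.
rewrite sumr_const card_ord -mulr_natl.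
by have := sqn_mean_le (index_enum 'I_K) (fun k => w k l) (z l); rewrite size_index_enum card_ord.
Qed.

End BlockMean.

Section LastSync.
Variables (Q t : nat).

Lemma last_sync_add_mod : (last_sync Q t + t %% Q)%N = t.
Proof. by rewrite /last_sync mulnC -divn_eq. Qed.

Lemma dvdn_last_sync : (Q %| last_sync Q t)%N.
Proof. exact: dvdn_mulr. Qed.

Lemma last_sync_no_reset : (0 < Q)%N ->
  forall i, (0 < i <= t %% Q)%N -> ~~ (Q %| last_sync Q t + i)%N.
Proof.
move=> Q_gt0 i /andP[i_gt0 le_i_mod]; rewrite dvdn_addr ?dvdn_last_sync // gtnNdvd //.
by rewrite (leq_ltn_trans le_i_mod) ?ltn_mod.
Qed.

End LastSync.

Section LocalIterates.
Variables (R : realFieldType) (N K Q : nat) (D : 'I_N -> nat) (eta : R).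
Variable theta : nat -> 'I_K -> forall j : 'I_N, 'rV[R]_(D j).
Variable g : nat -> 'I_K -> forall j : 'I_N, bvec R D -> 'rV[R]_(D j).
Hypothesis theta_update : forall t k j,
  theta t.+1 k j = theta_cur Q theta t k j - eta *: g t k j (yvec Q theta t k j).

Local Notation grad tau k j := (g tau k j (yvec Q theta tau k j)).

Lemma theta_avg_cur t j : (0 < K)%N ->
  theta_avg theta t j = (K%:R)^-1 *: \sum_(k < K) theta_cur Q theta t k j.
Proof.
move=> K_gt0; rewrite /theta_cur; case: (Q %| t)%N => //.
by rewrite sumr_const card_ord -scaler_nat scalerA mulVf ?scale1r // pnatr_eq0 -lt0n.
Qed.

Lemma theta_cur_telescope s n k j :
  (forall i, (0 < i <= n)%N -> ~~ (Q %| s + i)%N) ->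
  theta_cur Q theta (s + n) k j =
  theta_cur Q theta s k j - eta *: \sum_(s <= tau < s + n) grad tau k j.
Proof.
elim: n => [|n IH] no_reset; first by rewrite addn0 big_geq // scaler0 subr0.
have no_reset_n : ~~ (Q %| s + n.+1)%N by apply: no_reset; rewrite /= leqnn.
rewrite {1}/theta_cur (negPf no_reset_n) addnS theta_update IH; last first.
  by move=> i /andP[i_gt0 le_in]; rewrite no_reset // i_gt0 leqW.
by rewrite big_nat_recr ?leq_addr //= scalerDr opprD addrA.
Qed.

Lemma theta_cur_drift t k j : (0 < Q)%N ->
  theta_cur Q theta t k j =
  theta_avg theta (last_sync Q t) j - eta *: \sum_(last_sync Q t <= tau < t) grad tau k j.
Proof.
move=> Q_gt0; have := theta_cur_telescope k j (@last_sync_no_reset Q t Q_gt0).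
by rewrite last_sync_add_mod => ->; rewrite /theta_cur dvdn_last_sync.
Qed.

End LocalIterates.

Theorem lemma6 (R : realFieldType) (N K Q : nat) (D : 'I_N -> nat)
  (hN : (0 < N)%N) (hK : (0 < K)%N) (hQ : (0 < Q)%N)
  (eta : R) (heta : 0 < eta)
  (theta : nat -> 'I_K -> forall j : 'I_N, 'rV[R]_(D j))
  (g : nat -> 'I_K -> forall j : 'I_N, bvec R D -> 'rV[R]_(D j))
  (hupd : forall (t : nat) (k : 'I_K) (j : 'I_N),
      theta t.+1 k j = theta_cur Q theta t k j
                       - eta *: g t k j (yvec Q theta t k j))
  (t : nat) (Lmax : R) (hL : 0 < Lmax) :
  Lmax ^+ 2 / K%:R *
    \sum_(j < N) \sum_(k < K)
      bsqdist (theta_avg theta t) (yvec Q theta t k j)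
  <= eta ^+ 2 * Lmax ^+ 2 * Q%:R * N%:R / K%:R *
    \sum_(j < N) \sum_(last_sync Q t <= tau < t) \sum_(p < K)
      sqn (g tau p j (yvec Q theta tau p j)).
Proof.
set t0 := last_sync Q t.
set F := \sum_(j < N) \sum_(t0 <= tau < t) _.
pose E := \sum_(l < N) \sum_(k < K) sqn (theta_cur Q theta t k l - theta_avg theta t0 l).
have block_le j : \sum_(k < K) bsqdist (theta_avg theta t) (yvec Q theta t k j) <= E.
  exact: sum_bsqdist_mean_dfwith (fun l => theta_avg_cur Q theta t l hK).
have drift_le : E <= eta ^+ 2 * Q%:R * F.
  have le_tQ : (t - t0 <= Q)%N.
    by rewrite -{1}(last_sync_add_mod Q t) addKn ltnW ?ltn_mod.
  rewrite /E /F mulr_sumr; apply: ler_sum => l _.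
  rewrite [X in _ <= _ * X]exchange_big /= mulr_sumr; apply: ler_sum => k _.
  rewrite (theta_cur_drift hupd) // addrC addKr sqnN sqnZ -[leRHS]mulrA ler_wpM2l ?sqr_ge0 //.
  apply: le_trans (sqn_sum_le _ _) _.
  by rewrite size_iota ler_wpM2r ?ler_nat // sumr_ge0 // => tau _; apply: sqn_ge0.
have -> : eta ^+ 2 * Lmax ^+ 2 * Q%:R * N%:R / K%:R * F =
          Lmax ^+ 2 / K%:R * (N%:R * (eta ^+ 2 * Q%:R * F)) by ring.
apply: ler_wpM2l; first by rewrite divr_ge0 ?sqr_ge0.
apply: le_trans (ler_sum _ (fun j _ => block_le j)) _.
by rewrite sumr_const card_ord -[E *+ N]mulr_natl ler_wpM2l.
Qed.
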